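(* There is a universal constant $c>0$ and an algorithm such that, whenever $(F,f)$ satisfies Assumption A with $\nu\le c\sqrt{\epsilon^3/\rho}$ and $\ell>\sqrt{\rho\epsilon}$, the algorithm, using only function-value queries of $f$ (a number of queries exponential in the problem parameters, e.g. $e^{O(d^2\log(d/\epsilon))}$ up to the dependence on $B,\ell,\rho$), outputs an $\epsilon$-second-order stationary point of $F$.
   Context: Assumption A for $F,f:\mathbb{R}^d\to\mathbb{R}$: $F$ is $B$-bounded ($|F|\le B$), $\ell$-gradient Lipschitz, $\rho$-Hessian Lipschitz (spectral norm), and $\sup_x|F(x)-f(x)|\le\nu$. An $\epsilon$-SOSP of $F$ is a point $x$ with $\|\nabla F(x)\|\le\epsilon$ and $\lambda_{\min}(\nabla^2F(x))\ge-\sqrt{\rho\epsilon}$. (Here an ''$\epsilon$-SOSP'' is understood up to absolute constant factors in $\epsilon$.) *)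

From Stdlib Require Import Reals Lra Lia Arith.
Open Scope R_scope.

(* A point of R^d is a real sequence vanishing from index d on. *)
Record vec (d : nat) : Type := MkVec {
  vc : nat -> R ;
  vsupp : forall i, (d <= i)%nat -> vc i = 0 }.
Arguments MkVec {d} _ _.
Arguments vc {d} _ _.
Arguments vsupp {d} _ _ _.

Fixpoint sumR (n : nat) (f : nat -> R) : R :=
  match n with O => 0 | S m => sumR m f + f m end.

Definition dot {d} (x y : vec d) : R := sumR d (fun i => vc x i * vc y i).
Definition vnorm {d} (x : vec d) : R := sqrt (dot x x).

Definition vadd {d} (x y : vec d) : vec d.
Proof.
  refine (MkVec (fun i => vc x i + vc y i) _).
  intros i Hi. rewrite (vsupp x i Hi), (vsupp y i Hi). ring.
Defined.

Definition vsub {d} (x y : vec d) : vec d.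
Proof.
  refine (MkVec (fun i => vc x i - vc y i) _).
  intros i Hi. rewrite (vsupp x i Hi), (vsupp y i Hi). ring.
Defined.

(* d x d real matrices (only entries with indices < d matter) *)
Definition mat := nat -> nat -> R.

Definition mv {d} (A : mat) (v : vec d) : vec d.
Proof.
  refine (MkVec (fun i => if Nat.ltb i d then sumR d (fun j => A i j * vc v j) else 0) _).
  intros i Hi. apply Nat.ltb_ge in Hi. rewrite Hi. reflexivity.
Defined.

Definition msub (A B : mat) : mat := fun i j => A i j - B i j.

Definition opnorm_le (d : nat) (A : mat) (c : R) : Prop :=
  forall v : vec d, vnorm (mv A v) <= c * vnorm v.

Definition eigenvalue (d : nat) (A : mat) (lam : R) : Prop :=
  exists v : vec d, (exists i, (i < d)%nat /\ vc v i <> 0) /\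
    forall i, vc (mv A v) i = lam * vc v i.

Definition lambda_min_ge (d : nat) (A : mat) (s : R) : Prop :=
  forall lam, eigenvalue d A lam -> s <= lam.

Definition has_gradient {d} (F : vec d -> R) (g : vec d -> vec d) : Prop :=
  forall x : vec d, forall e, 0 < e -> exists del, 0 < del /\
    forall h : vec d, vnorm h < del ->
      Rabs (F (vadd x h) - F x - dot (g x) h) <= e * vnorm h.

(* H x is the Jacobian of g at x (the Hessian of F when g is its gradient) *)
Definition has_jacobian {d} (g : vec d -> vec d) (H : vec d -> mat) : Prop :=
  forall x : vec d, forall e, 0 < e -> exists del, 0 < del /\
    forall h : vec d, vnorm h < del ->
      vnorm (vsub (vsub (g (vadd x h)) (g x)) (mv (H x) h)) <= e * vnorm h.

Definition assumptionA (d : nat) (F f : vec d -> R) (gF : vec d -> vec d)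
    (HF : vec d -> mat) (B l rho nu : R) : Prop :=
  has_gradient F gF /\ has_jacobian gF HF /\
  (forall x, Rabs (F x) <= B) /\
  (forall x y, vnorm (vsub (gF x) (gF y)) <= l * vnorm (vsub x y)) /\
  (forall x y, opnorm_le d (msub (HF x) (HF y)) (rho * vnorm (vsub x y))) /\
  (forall x, Rabs (F x - f x) <= nu).

Definition is_SOSP {d} (gF : vec d -> vec d) (HF : vec d -> mat)
    (rho eps : R) (x : vec d) : Prop :=
  vnorm (gF x) <= eps /\ lambda_min_ge d (HF x) (- sqrt (rho * eps)).

(* An adaptive deterministic algorithm: either output a point, or query the
   oracle at a point and continue depending on the returned value. *)
Inductive qalg (d : nat) : Type :=
  | Ret : vec d -> qalg d
  | Ask : vec d -> (R -> qalg d) -> qalg d.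
Arguments Ret {d} _.
Arguments Ask {d} _ _.

Fixpoint run {d} (a : qalg d) (f : vec d -> R) : vec d * nat :=
  match a with
  | Ret x => (x, O)
  | Ask x k => let (y, n) := run (k (f x)) f in (y, S n)
  end.

From Stdlib Require Import Reals Lra Lia List ZArith.
From Stdlib Require Import ClassicalDescription FunctionalExtensionality ProofIrrelevance.
Open Scope R_scope.

(** Noisy finite-difference descent.  Put [q = sqrt (eps / rho)].  A round at [x] queries [f] at
    [x], [x +- (q/8) w] and [x +- q w] for every [w] of a grid on the cube of mesh about
    [sqrt (rho eps) / l].  Since the Hessian is [rho]-Lipschitz, the central difference estimates
    [<gF x, w>] within [O (nu / q + rho q^2)] and the second difference estimates
    [<HF x w, w>] within [O ((nu + rho q^3) / q^2)]; for [nu = O (eps^(3/2) / sqrt rho)] both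
    errors are small.  A direction of estimated slope [> eps] gives a gradient step decreasing [F]
    by [Omega (eps^2 / l)]; a direction of estimated curvature [< - eps / q] gives a point
    [x +- q w] decreasing [F] by [Omega (eps q)].  Otherwise every unit vector is close to a tested
    direction, so [|gF x| = O (eps)] and [lambda_min (HF x) >= - O (sqrt (rho eps))].  As
    [|F| <= B], the descent stops within [O (B / decrease)] rounds of [O ((2N + 1)^d)] queries. *)

(** * Vectors *)

Lemma vec_ext {d} (a b : vec d) : (forall i, vc a i = vc b i) -> a = b.
Proof.
  destruct a as [fa pa], b as [fb pb]; simpl; intros H.
  assert (fa = fb) by (apply functional_extensionality; auto). subst fb.
  f_equal. apply proof_irrelevance.
Qed.

Definition vzero (d : nat) : vec d := MkVec (fun _ => 0) (fun _ _ => eq_refl).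

Definition vscale {d} (a : R) (v : vec d) : vec d.
Proof.
  refine (MkVec (fun i => a * vc v i) _).
  intros i Hi. rewrite (vsupp v i Hi). ring.
Defined.

Lemma sumR_ext n f g : (forall i, (i < n)%nat -> f i = g i) -> sumR n f = sumR n g.
Proof.
  induction n as [|n IH]; simpl; intros H; auto.
  rewrite IH, (H n) by (auto; intros; apply H; lia). reflexivity.
Qed.

Lemma sumR_add n f g : sumR n (fun i => f i + g i) = sumR n f + sumR n g.
Proof. induction n; simpl; [ring | rewrite IHn; ring]. Qed.

Lemma sumR_sub n f g : sumR n (fun i => f i - g i) = sumR n f - sumR n g.
Proof. induction n; simpl; [ring | rewrite IHn; ring]. Qed.

Lemma sumR_scal n c f : sumR n (fun i => c * f i) = c * sumR n f.
Proof. induction n; simpl; [ring | rewrite IHn; ring]. Qed.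

Lemma sumR_const n c : sumR n (fun _ => c) = INR n * c.
Proof. induction n; simpl sumR; [simpl; ring | rewrite IHn, S_INR; ring]. Qed.

Lemma sumR_le n f g : (forall i, (i < n)%nat -> f i <= g i) -> sumR n f <= sumR n g.
Proof.
  induction n as [|n IH]; simpl; intros H; [lra|].
  assert (f n <= g n) by (apply H; lia).
  assert (sumR n f <= sumR n g) by (apply IH; intros; apply H; lia). lra.
Qed.

Lemma sumR_nonneg n f : (forall i, (i < n)%nat -> 0 <= f i) -> 0 <= sumR n f.
Proof. intros H. rewrite <- (Rmult_0_r (INR n)), <- sumR_const. now apply sumR_le. Qed.

Lemma sumR_ge_term n f j :
  (forall i, (i < n)%nat -> 0 <= f i) -> (j < n)%nat -> f j <= sumR n f.
Proof.
  induction n as [|n IH]; simpl; intros H Hj; [lia|].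
  assert (0 <= f n) by (apply H; lia).
  destruct (Nat.eq_dec j n) as [->|Hjn].
  - assert (0 <= sumR n f) by (apply sumR_nonneg; intros; apply H; lia). lra.
  - assert (f j <= sumR n f) by (apply IH; [intros; apply H | ]; lia). lra.
Qed.

Lemma dot_comm {d} (x y : vec d) : dot x y = dot y x.
Proof. apply sumR_ext. intros; ring. Qed.

Lemma dot_add_l {d} (x y z : vec d) : dot (vadd x y) z = dot x z + dot y z.
Proof. unfold dot. rewrite <- sumR_add. apply sumR_ext. intros; simpl; ring. Qed.

Lemma dot_sub_l {d} (x y z : vec d) : dot (vsub x y) z = dot x z - dot y z.
Proof. unfold dot. rewrite <- sumR_sub. apply sumR_ext. intros; simpl; ring. Qed.

Lemma dot_scale_l {d} a (x z : vec d) : dot (vscale a x) z = a * dot x z.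
Proof. unfold dot. rewrite <- sumR_scal. apply sumR_ext. intros; simpl; ring. Qed.

Lemma dot_add_r {d} (x y z : vec d) : dot z (vadd x y) = dot z x + dot z y.
Proof. rewrite !(dot_comm z). apply dot_add_l. Qed.

Lemma dot_sub_r {d} (x y z : vec d) : dot z (vsub x y) = dot z x - dot z y.
Proof. rewrite !(dot_comm z). apply dot_sub_l. Qed.

Lemma dot_scale_r {d} a (x z : vec d) : dot z (vscale a x) = a * dot z x.
Proof. rewrite !(dot_comm z). apply dot_scale_l. Qed.

Lemma dot_self_nonneg {d} (x : vec d) : 0 <= dot x x.
Proof. apply sumR_nonneg. intros; nra. Qed.

Lemma vnorm_nonneg {d} (x : vec d) : 0 <= vnorm x.
Proof. apply sqrt_pos. Qed.

Lemma vnorm_sq {d} (x : vec d) : vnorm x * vnorm x = dot x x.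
Proof. apply sqrt_sqrt, dot_self_nonneg. Qed.

Lemma vnorm_scale {d} a (x : vec d) : vnorm (vscale a x) = Rabs a * vnorm x.
Proof.
  unfold vnorm. rewrite dot_scale_l, dot_scale_r, <- Rmult_assoc.
  rewrite sqrt_mult by (nra || apply dot_self_nonneg).
  rewrite <- sqrt_Rsqr_abs. reflexivity.
Qed.

Lemma vnorm_opp {d} (w : vec d) : vnorm (vscale (-1) w) = vnorm w.
Proof. rewrite vnorm_scale, Rabs_left by lra. ring. Qed.

Lemma cauchy_schwarz {d} (x y : vec d) : Rabs (dot x y) <= vnorm x * vnorm y.
Proof.
  set (A := dot x x). set (Bq := dot y y). set (S := dot x y).
  assert (Hq : forall t, 0 <= A - 2 * t * S + t * t * Bq).
  { intros t. assert (H := dot_self_nonneg (vsub x (vscale t y))).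
    rewrite dot_sub_l, !dot_sub_r, !dot_scale_l, !dot_scale_r, (dot_comm y x) in H.
    unfold A, Bq, S. lra. }
  (* the discriminant of the nonnegative quadratic [t |-> |x - t y|^2] is nonpositive *)
  assert (HS : S * S <= A * Bq).
  { assert (HA : 0 <= A) by apply dot_self_nonneg.
    destruct (Req_dec Bq 0) as [HB0|HB0].
    - assert (HS0 : S = 0).
      { destruct (Req_dec S 0); auto. exfalso. specialize (Hq ((A + 1) / (2 * S))).
        rewrite HB0 in Hq.
        replace (2 * ((A + 1) / (2 * S)) * S) with (A + 1) in Hq by (field; auto). lra. }
      rewrite HS0, HB0. lra.
    - assert (HBpos : 0 < Bq) by (assert (Hy := dot_self_nonneg y); fold Bq in Hy; lra).
      specialize (Hq (S / Bq)).
      replace (A - 2 * (S / Bq) * S + S / Bq * (S / Bq) * Bq)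
        with ((A * Bq - S * S) / Bq) in Hq by (field; auto).
      apply Rmult_le_compat_r with (r := Bq) in Hq; [|lra].
      unfold Rdiv in Hq. rewrite Rmult_0_l, Rmult_assoc, Rinv_l in Hq; lra. }
  rewrite <- (sqrt_Rsqr_abs S). unfold vnorm. rewrite <- sqrt_mult by apply dot_self_nonneg.
  apply sqrt_le_1_alt. exact HS.
Qed.

Lemma vnorm_add {d} (x y : vec d) : vnorm (vadd x y) <= vnorm x + vnorm y.
Proof.
  pose proof (vnorm_nonneg (vadd x y)). pose proof (vnorm_nonneg x). pose proof (vnorm_nonneg y).
  enough (vnorm (vadd x y) * vnorm (vadd x y) <= (vnorm x + vnorm y) * (vnorm x + vnorm y))
    by nra.
  rewrite vnorm_sq, dot_add_l, !dot_add_r, (dot_comm y x).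
  pose proof (vnorm_sq x). pose proof (vnorm_sq y).
  pose proof (Rle_trans _ _ _ (Rle_abs _) (cauchy_schwarz x y)). nra.
Qed.

Lemma vnorm_sub {d} (x y : vec d) : vnorm (vsub x y) <= vnorm x + vnorm y.
Proof.
  replace (vsub x y) with (vadd x (vscale (-1) y)) by (apply vec_ext; intros; simpl; ring).
  rewrite <- (vnorm_opp y). apply vnorm_add.
Qed.

Lemma vnorm_le_sub_add {d} (x y : vec d) : vnorm x <= vnorm (vsub x y) + vnorm y.
Proof.
  replace x with (vadd (vsub x y) y) at 1 by (apply vec_ext; intros; simpl; ring).
  apply vnorm_add.
Qed.

Lemma vnorm_pos {d} (v : vec d) : (exists i, (i < d)%nat /\ vc v i <> 0) -> 0 < vnorm v.
Proof.
  intros [i [Hi Hv]]. apply sqrt_lt_R0.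
  assert (H := sumR_ge_term d (fun i => vc v i * vc v i) i ltac:(intros; nra) Hi).
  assert (0 < vc v i * vc v i) by (apply Rsqr_pos_lt; auto). unfold dot. lra.
Qed.

Lemma vnorm_normalize {d} (v : vec d) : 0 < vnorm v -> vnorm (vscale (/ vnorm v) v) = 1.
Proof.
  intros H. rewrite vnorm_scale, Rabs_right by (left; apply Rinv_0_lt_compat; auto).
  field; lra.
Qed.

Lemma vnorm1_coord {d} (u : vec d) : vnorm u = 1 -> forall i, Rabs (vc u i) <= 1.
Proof.
  intros Hu i. destruct (Nat.lt_ge_cases i d) as [Hi|Hi].
  - assert (H := sumR_ge_term d (fun i => vc u i * vc u i) i ltac:(intros; nra) Hi).
    fold (dot u u) in H. rewrite <- vnorm_sq, Hu in H.
    rewrite <- (Rabs_right 1) by lra. apply Rsqr_le_abs_0. unfold Rsqr. lra.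
  - rewrite (vsupp u i Hi), Rabs_R0. lra.
Qed.

Lemma mv_scale {d} A a (v : vec d) : mv A (vscale a v) = vscale a (mv A v).
Proof.
  apply vec_ext; intros i; simpl. destruct (Nat.ltb i d); [|ring].
  rewrite <- sumR_scal. apply sumR_ext; intros; simpl; ring.
Qed.

Lemma mv_sub {d} A (v w : vec d) : mv A (vsub v w) = vsub (mv A v) (mv A w).
Proof.
  apply vec_ext; intros i; simpl. destruct (Nat.ltb i d); [|ring].
  rewrite <- sumR_sub. apply sumR_ext; intros; simpl; ring.
Qed.

Lemma mv_msub {d} A B (v : vec d) : mv (msub A B) v = vsub (mv A v) (mv B v).
Proof.
  apply vec_ext; intros i; simpl. destruct (Nat.ltb i d); [|ring].
  rewrite <- sumR_sub. apply sumR_ext; intros; unfold msub; simpl; ring.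
Qed.

Lemma quad_form_msub {d} (A B : mat) (w : vec d) c :
  opnorm_le d (msub A B) c -> Rabs (dot (mv A w) w - dot (mv B w) w) <= c * vnorm w * vnorm w.
Proof.
  intros Hop. rewrite <- dot_sub_l, <- mv_msub. eapply Rle_trans; [apply cauchy_schwarz|].
  apply Rmult_le_compat_r; [apply vnorm_nonneg | apply Hop].
Qed.

Lemma eigenvalue_quad_form {d} (A : mat) lam (v : vec d) :
  0 < vnorm v -> (forall i, vc (mv A v) i = lam * vc v i) ->
  let u := vscale (/ vnorm v) v in dot (mv A u) u = lam.
Proof.
  intros Hv Heig u.
  assert (E : mv A u = vscale lam u).
  { apply vec_ext; intros i. unfold u. rewrite mv_scale.
    change (/ vnorm v * vc (mv A v) i = lam * (/ vnorm v * vc v i)). rewrite Heig. ring. }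
  rewrite E, dot_scale_l, <- vnorm_sq. unfold u. rewrite vnorm_normalize by auto. ring.
Qed.

(** * Taylor estimates along lines *)

Definition pt {d} (x : vec d) (t : R) (w : vec d) : vec d := vadd x (vscale t w).

Lemma pt_0 {d} (x w : vec d) : pt x 0 w = x.
Proof. apply vec_ext; intros; simpl; ring. Qed.

Lemma pt_shift {d} (x w : vec d) t h : pt x (t + h) w = vadd (pt x t w) (vscale h w).
Proof. apply vec_ext; intros; simpl; ring. Qed.

Lemma pt_sub {d} (x w : vec d) t : vsub (pt x t w) x = vscale t w.
Proof. apply vec_ext; intros; simpl; ring. Qed.

Lemma pt_opp {d} (x w : vec d) t : pt x (- t) w = pt x t (vscale (-1) w).
Proof. apply vec_ext; intros; simpl; ring. Qed.

Lemma derivable_pt_lim_quadratic a b x :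
  derivable_pt_lim (fun s => a * s + b * s ^ 2) x (a + 2 * b * x).
Proof.
  assert (H1 := derivable_pt_lim_scal _ a x _ (derivable_pt_lim_pow x 1)).
  assert (H2 := derivable_pt_lim_scal _ b x _ (derivable_pt_lim_pow x 2)).
  assert (H := derivable_pt_lim_plus _ _ x _ _ H1 H2).
  replace (a + 2 * b * x) with (a * (INR 1 * x ^ Nat.pred 1) + b * (INR 2 * x ^ Nat.pred 2))
    by (simpl; ring).
  eapply derivable_pt_lim_ext; [|exact H].
  intros z. unfold plus_fct, mult_real_fct. simpl. ring.
Qed.

Lemma mvt_quadratic_remainder (g g1 : R -> R) a b T E :
  (forall t, derivable_pt_lim g t (g1 t)) -> 0 < T ->
  (forall c, 0 < c < T -> Rabs (g1 c - (a + 2 * b * c)) <= E) ->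
  Rabs (g T - g 0 - a * T - b * T ^ 2) <= E * T.
Proof.
  intros Hg HT HE.
  destruct (MVT_cor2 (fun s => g s - (a * s + b * s ^ 2)) (fun s => g1 s - (a + 2 * b * s)) 0 T)
    as [c [Hc1 Hc2]]; [lra | intros; apply derivable_pt_lim_minus;
                             auto using derivable_pt_lim_quadratic |].
  replace (g T - g 0 - a * T - b * T ^ 2) with ((g1 c - (a + 2 * b * c)) * (T - 0))
    by (rewrite <- Hc1; ring).
  rewrite Rabs_mult, (Rabs_right (T - 0)) by lra.
  replace (T - 0) with T by ring. apply Rmult_le_compat_r; [lra | apply HE; lra].
Qed.

Lemma taylor2_remainder (p p1 p2 : R -> R) M T :
  (forall t, derivable_pt_lim p t (p1 t)) -> (forall t, derivable_pt_lim p1 t (p2 t)) ->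
  (forall t, 0 <= t <= T -> Rabs (p2 t - p2 0) <= M * t) -> 0 < T ->
  Rabs (p T - p 0 - T * p1 0 - T ^ 2 / 2 * p2 0) <= M * T ^ 3.
Proof.
  intros Hp Hp1 HM HT.
  assert (HM0 : 0 <= M) by (specialize (HM T ltac:(lra)); pose proof (Rabs_pos (p2 T - p2 0)); nra).
  assert (Hfirst : forall t, 0 < t <= T -> Rabs (p1 t - p1 0 - t * p2 0) <= M * t ^ 2).
  { intros t Ht.
    assert (H := mvt_quadratic_remainder p1 p2 (p2 0) 0 t (M * t) Hp1 ltac:(lra)).
    replace (p1 t - p1 0 - p2 0 * t - 0 * t ^ 2) with (p1 t - p1 0 - t * p2 0) in H by ring.
    replace (M * t ^ 2) with (M * t * t) by ring. apply H.
    intros c Hc. replace (p2 c - (p2 0 + 2 * 0 * c)) with (p2 c - p2 0) by ring.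
    eapply Rle_trans; [apply HM; lra | apply Rmult_le_compat_l; lra]. }
  assert (H := mvt_quadratic_remainder p p1 (p1 0) (p2 0 / 2) T (M * T ^ 2) Hp HT).
  replace (p T - p 0 - p1 0 * T - p2 0 / 2 * T ^ 2) with (p T - p 0 - T * p1 0 - T ^ 2 / 2 * p2 0)
    in H by field.
  replace (M * T ^ 3) with (M * T ^ 2 * T) by ring. apply H.
  intros c Hc. replace (p1 c - (p1 0 + 2 * (p2 0 / 2) * c)) with (p1 c - p1 0 - c * p2 0) by field.
  eapply Rle_trans; [apply Hfirst; lra|].
  apply Rmult_le_compat_l; [lra | apply pow_incr; lra].
Qed.

Section Line_estimates.

Variables (d : nat) (F : vec d -> R) (gF : vec d -> vec d) (HF : vec d -> mat) (l rho : R).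
Hypothesis HG : has_gradient F gF.
Hypothesis HJ : has_jacobian gF HF.
Hypothesis HLg : forall x y, vnorm (vsub (gF x) (gF y)) <= l * vnorm (vsub x y).
Hypothesis HLH : forall x y, opnorm_le d (msub (HF x) (HF y)) (rho * vnorm (vsub x y)).

Lemma derivable_pt_lim_line x w t :
  derivable_pt_lim (fun t => F (pt x t w)) t (dot (gF (pt x t w)) w).
Proof.
  intros e He. set (nw := vnorm w). assert (Hnw : 0 <= nw) by apply vnorm_nonneg.
  destruct (HG (pt x t w) (e / (nw + 1))) as [del [Hdel Hh]]; [apply Rdiv_lt_0_compat; lra|].
  exists (mkposreal (del / (nw + 1)) ltac:(apply Rdiv_lt_0_compat; lra)). simpl.
  intros h Hh0 Hhd.
  assert (Hah : 0 < Rabs h) by (apply Rabs_pos_lt; auto).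
  assert (Hv : vnorm (vscale h w) < del).
  { rewrite vnorm_scale. fold nw.
    apply Rlt_le_trans with (del / (nw + 1) * (nw + 1)); [nra | right; field; lra]. }
  specialize (Hh _ Hv). rewrite <- pt_shift, dot_scale_r, vnorm_scale in Hh. fold nw in Hh.
  replace ((F (pt x (t + h) w) - F (pt x t w)) / h - dot (gF (pt x t w)) w)
    with ((F (pt x (t + h) w) - F (pt x t w) - h * dot (gF (pt x t w)) w) / h) by (field; auto).
  unfold Rdiv at 1. rewrite Rabs_mult, Rabs_inv.
  apply Rle_lt_trans with (e / (nw + 1) * (Rabs h * nw) * / Rabs h).
  { apply Rmult_le_compat_r; [left; apply Rinv_0_lt_compat|]; auto. }
  replace (e / (nw + 1) * (Rabs h * nw) * / Rabs h) with (e * nw / (nw + 1)) by (field; lra).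
  apply Rmult_lt_reg_r with (nw + 1); [lra|].
  replace (e * nw / (nw + 1) * (nw + 1)) with (e * nw) by (field; lra). nra.
Qed.

Lemma derivable_pt_lim_line_slope x w t :
  derivable_pt_lim (fun t => dot (gF (pt x t w)) w) t (dot (mv (HF (pt x t w)) w) w).
Proof.
  intros e He. set (nw := vnorm w). assert (Hnw : 0 <= nw) by apply vnorm_nonneg.
  destruct (HJ (pt x t w) (e / (nw * nw + 1))) as [del [Hdel Hh]]; [apply Rdiv_lt_0_compat; nra|].
  exists (mkposreal (del / (nw + 1)) ltac:(apply Rdiv_lt_0_compat; lra)). simpl.
  intros h Hh0 Hhd.
  assert (Hah : 0 < Rabs h) by (apply Rabs_pos_lt; auto).
  assert (Hv : vnorm (vscale h w) < del).
  { rewrite vnorm_scale. fold nw.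
    apply Rlt_le_trans with (del / (nw + 1) * (nw + 1)); [nra | right; field; lra]. }
  specialize (Hh _ Hv). rewrite <- pt_shift, vnorm_scale in Hh. fold nw in Hh.
  set (V := vsub (vsub (gF (pt x (t + h) w)) (gF (pt x t w)))
                 (mv (HF (pt x t w)) (vscale h w))) in Hh.
  replace ((dot (gF (pt x (t + h) w)) w - dot (gF (pt x t w)) w) / h - dot (mv (HF (pt x t w)) w) w)
    with (dot V w * / h) by (unfold V; rewrite !dot_sub_l, mv_scale, dot_scale_l; field; auto).
  rewrite Rabs_mult, Rabs_inv.
  apply Rle_lt_trans with (e / (nw * nw + 1) * (Rabs h * nw) * nw * / Rabs h).
  { apply Rmult_le_compat_r; [left; apply Rinv_0_lt_compat; auto|].
    eapply Rle_trans; [apply cauchy_schwarz | apply Rmult_le_compat_r; auto]. }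
  replace (e / (nw * nw + 1) * (Rabs h * nw) * nw * / Rabs h)
    with (e * (nw * nw) / (nw * nw + 1)) by (field; nra).
  apply Rmult_lt_reg_r with (nw * nw + 1); [nra|].
  replace (e * (nw * nw) / (nw * nw + 1) * (nw * nw + 1)) with (e * (nw * nw)) by (field; nra). nra.
Qed.

Lemma taylor2_line x w T : 0 < T ->
  Rabs (F (pt x T w) - F x - T * dot (gF x) w - T ^ 2 / 2 * dot (mv (HF x) w) w)
    <= rho * vnorm w ^ 3 * T ^ 3.
Proof.
  intros HT.
  assert (H := taylor2_remainder _ _ _ (rho * vnorm w ^ 3) T
                 (derivable_pt_lim_line x w) (derivable_pt_lim_line_slope x w)).
  cbv beta in H. rewrite !pt_0 in H. apply H; auto.
  intros t Ht. eapply Rle_trans; [apply quad_form_msub, HLH|].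
  rewrite pt_sub, vnorm_scale, Rabs_right by lra. right; ring.
Qed.

Lemma central_difference_error x w h : 0 < h ->
  Rabs (F (pt x h w) - F (pt x (- h) w) - 2 * h * dot (gF x) w) <= 2 * rho * vnorm w ^ 3 * h ^ 3.
Proof.
  intros Hh.
  assert (H1 := taylor2_line x w h Hh).
  assert (H2 := taylor2_line x (vscale (-1) w) h Hh).
  rewrite <- pt_opp, vnorm_opp, dot_scale_r, mv_scale, dot_scale_l, dot_scale_r in H2.
  match type of H1 with Rabs ?a <= _ => match type of H2 with Rabs ?b <= _ =>
    replace (F (pt x h w) - F (pt x (- h) w) - 2 * h * dot (gF x) w) with (a - b) by ring end end.
  eapply Rle_trans; [apply Rabs_triang|]. rewrite Rabs_Ropp. lra.
Qed.

Lemma second_difference_error x w h : 0 < h ->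
  Rabs (F (pt x h w) + F (pt x (- h) w) - 2 * F x - h ^ 2 * dot (mv (HF x) w) w)
    <= 2 * rho * vnorm w ^ 3 * h ^ 3.
Proof.
  intros Hh.
  assert (H1 := taylor2_line x w h Hh).
  assert (H2 := taylor2_line x (vscale (-1) w) h Hh).
  rewrite <- pt_opp, vnorm_opp, dot_scale_r, mv_scale, dot_scale_l, dot_scale_r in H2.
  match type of H1 with Rabs ?a <= _ => match type of H2 with Rabs ?b <= _ =>
    replace (F (pt x h w) + F (pt x (- h) w) - 2 * F x - h ^ 2 * dot (mv (HF x) w) w)
      with (a + b) by field end end.
  eapply Rle_trans; [apply Rabs_triang | lra].
Qed.

Lemma descent_lemma x w eta : 0 <= l -> 0 < eta ->
  F (pt x (- eta) w) <= F x - eta * dot (gF x) w + l * eta ^ 2 * vnorm w ^ 2.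
Proof.
  intros Hl He.
  destruct (MVT_cor2 (fun t => F (pt x t w)) (fun t => dot (gF (pt x t w)) w) (- eta) 0)
    as [c [Hc1 Hc2]]; [lra | intros; apply derivable_pt_lim_line|].
  rewrite pt_0 in Hc1.
  assert (Hslope : Rabs (dot (gF (pt x c w)) w - dot (gF x) w) <= l * (- c * vnorm w) * vnorm w).
  { rewrite <- dot_sub_l. eapply Rle_trans; [apply cauchy_schwarz|].
    apply Rmult_le_compat_r; [apply vnorm_nonneg|].
    rewrite <- (Rabs_left c), <- vnorm_scale, <- (pt_sub x w c) by lra. apply HLg. }
  assert (Habs := Rle_abs (- (dot (gF (pt x c w)) w - dot (gF x) w))). rewrite Rabs_Ropp in Habs.
  assert (l * (- c * vnorm w) * vnorm w <= l * eta * vnorm w ^ 2).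
  { pose proof (vnorm_nonneg w).
    assert (0 <= l * vnorm w ^ 2) by (apply Rmult_le_pos; [|apply pow_le]; auto). nra. }
  nra.
Qed.

Lemma hessian_opnorm_le x (v : vec d) : vnorm (mv (HF x) v) <= l * vnorm v.
Proof.
  set (a := vnorm (mv (HF x) v)). set (b := vnorm v).
  assert (Hb : 0 <= b) by apply vnorm_nonneg.
  (* |HF x (t v)| <= |gF (x + t v) - gF x| + o(t) <= (l + e) t |v| for t small *)
  assert (Hall : forall e, 0 < e -> a <= (l + e) * b).
  { intros e He. destruct (HJ x e He) as [del [Hdel Hh]].
    set (t := del / (2 * (b + 1))). assert (Ht : 0 < t) by (apply Rdiv_lt_0_compat; lra).
    assert (Htv : vnorm (vscale t v) < del).
    { rewrite vnorm_scale, Rabs_right by lra. fold b. unfold t.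
      apply Rmult_lt_reg_r with (2 * (b + 1)); [lra|].
      replace (del / (2 * (b + 1)) * b * (2 * (b + 1))) with (del * b) by (field; lra). nra. }
    specialize (Hh _ Htv).
    set (J := vsub (vsub (gF (vadd x (vscale t v))) (gF x)) (mv (HF x) (vscale t v))) in Hh.
    assert (E : mv (HF x) (vscale t v) = vsub (vsub (gF (vadd x (vscale t v))) (gF x)) J)
      by (apply vec_ext; intros i; unfold J; simpl; ring).
    assert (H1 := vnorm_sub (vsub (gF (vadd x (vscale t v))) (gF x)) J).
    rewrite <- E, mv_scale, vnorm_scale, Rabs_right in H1 by lra.
    assert (H2 := HLg (vadd x (vscale t v)) x).
    replace (vsub (vadd x (vscale t v)) x) with (vscale t v) in H2
      by (apply vec_ext; intros; simpl; ring).
    rewrite vnorm_scale, Rabs_right in H2, Hh by lra.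
    apply Rmult_le_reg_l with t; [auto | fold a b in H1, H2, Hh; lra]. }
  apply le_epsilon. intros e He.
  specialize (Hall (e / (b + 1)) ltac:(apply Rdiv_lt_0_compat; lra)).
  assert (e / (b + 1) * b <= e).
  { apply Rmult_le_reg_r with (b + 1); [lra|].
    replace (e / (b + 1) * b * (b + 1)) with (e * b) by (field; lra). nra. }
  lra.
Qed.

End Line_estimates.

(** * A grid on the cube [[-1, 1]^d] *)

Lemma vnorm_le_coord {d} (v : vec d) c : 0 <= c ->
  (forall i, (i < d)%nat -> Rabs (vc v i) <= c) -> vnorm v <= sqrt (INR d) * c.
Proof.
  intros Hc Hv.
  rewrite <- (sqrt_pow2 c), <- sqrt_mult by (apply pos_INR || apply pow2_ge_0 || auto).
  apply sqrt_le_1_alt. unfold dot. rewrite <- sumR_const. apply sumR_le.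
  intros i Hi. specialize (Hv i Hi).
  assert (E : vc v i * vc v i = Rabs (vc v i) * Rabs (vc v i))
    by (rewrite <- Rabs_mult; symmetry; apply Rabs_right; nra).
  rewrite E. pose proof (Rabs_pos (vc v i)). simpl. nra.
Qed.

Definition zrange (N : nat) : list Z :=
  map (fun i => (Z.of_nat i - Z.of_nat N)%Z) (seq 0 (2 * N + 1)).

Fixpoint tuples (N : nat) (k : nat) : list (list Z) :=
  match k with
  | O => nil :: nil
  | S k' => flat_map (fun z => map (cons z) (tuples N k')) (zrange N)
  end.

Definition gvec (d N : nat) (L : list Z) : vec d.
Proof.
  refine (MkVec (fun i => if Nat.ltb i d then IZR (nth i L 0%Z) / INR N else 0) _).
  intros i Hi. apply Nat.ltb_ge in Hi. rewrite Hi. reflexivity.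
Defined.

(* The points of [(1/N) Z^d] in the cube [[-1, 1]^d]. *)
Definition grid (d N : nat) : list (vec d) := map (gvec d N) (tuples N d).

Lemma flat_map_length_const {A B} (f : A -> list B) (l : list A) c :
  (forall a, length (f a) = c) -> length (flat_map f l) = (length l * c)%nat.
Proof. intros H. induction l; simpl; auto. rewrite length_app, H, IHl. lia. Qed.

Lemma grid_length d N : length (grid d N) = Nat.pow (2 * N + 1) d.
Proof.
  unfold grid. rewrite length_map. induction d as [|d IH]; simpl; auto.
  rewrite (flat_map_length_const _ _ (length (tuples N d))) by (intros; apply length_map).
  unfold zrange. rewrite length_map, length_seq, IH. f_equal.
Qed.

Lemma in_zrange N z : (- Z.of_nat N <= z <= Z.of_nat N)%Z -> In z (zrange N).
Proof.
  intros Hz. apply in_map_iff. exists (Z.to_nat (z + Z.of_nat N)).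
  split; [rewrite Z2Nat.id; lia | apply in_seq; lia].
Qed.

Lemma in_tuples N L : (forall z, In z L -> In z (zrange N)) -> In L (tuples N (length L)).
Proof.
  induction L as [|z L IH]; simpl; intros H; auto.
  apply in_flat_map. exists z. split; [apply H; auto | apply in_map, IH; auto].
Qed.

Definition zfloor (N : nat) (x : R) : Z := (up (INR N * x) - 1)%Z.

Lemma zfloor_spec N x : INR N * x - 1 < IZR (zfloor N x) <= INR N * x.
Proof. unfold zfloor. rewrite minus_IZR. destruct (archimed (INR N * x)). simpl. lra. Qed.

Lemma zfloor_in_zrange N x : Rabs x <= 1 -> In (zfloor N x) (zrange N).
Proof.
  intros Hx. apply in_zrange.
  pose proof (Rle_abs x). pose proof (Rle_abs (- x)). rewrite Rabs_Ropp in *.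
  destruct (zfloor_spec N x) as [Z1 Z2]. pose proof (pos_INR N).
  rewrite INR_IZR_INZ in *.
  assert (A1 : IZR (- Z.of_nat N - 1) < IZR (zfloor N x)) by (rewrite minus_IZR, opp_IZR; nra).
  assert (A2 : IZR (zfloor N x) <= IZR (Z.of_nat N)) by nra.
  apply lt_IZR in A1. apply le_IZR in A2. lia.
Qed.

Lemma zfloor_div_error N x : (0 < N)%nat -> Rabs (IZR (zfloor N x) / INR N - x) <= 1 / INR N.
Proof.
  intros HN. apply lt_0_INR in HN. destruct (zfloor_spec N x).
  replace (IZR (zfloor N x) / INR N - x) with ((IZR (zfloor N x) - INR N * x) / INR N)
    by (field; lra).
  unfold Rdiv. rewrite Rabs_mult, Rabs_inv, (Rabs_right (INR N)) by lra.
  apply Rmult_le_compat_r; [left; apply Rinv_0_lt_compat; lra | apply Rabs_le; lra].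
Qed.

Lemma grid_approx d N (u : vec d) : (0 < N)%nat -> (forall i, Rabs (vc u i) <= 1) ->
  exists w, In w (grid d N) /\ vnorm (vsub w u) <= sqrt (INR d) / INR N.
Proof.
  intros HN Hu. set (L := map (fun i => zfloor N (vc u i)) (seq 0 d)).
  assert (HL : length L = d) by (unfold L; rewrite length_map, length_seq; auto).
  exists (gvec d N L). split.
  - apply in_map. rewrite <- HL at 1. apply in_tuples.
    intros z Hz. apply in_map_iff in Hz. destruct Hz as [i [<- _]]. apply zfloor_in_zrange, Hu.
  - unfold Rdiv. rewrite <- (Rmult_1_l (/ INR N)).
    apply vnorm_le_coord; [apply Rlt_le, Rdiv_lt_0_compat; [lra | apply lt_0_INR; auto]|].
    intros i Hi. simpl. rewrite (proj2 (Nat.ltb_lt i d) Hi).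
    unfold L. rewrite (nth_indep _ 0%Z ((fun i => zfloor N (vc u i)) 0%nat))
      by (rewrite length_map, length_seq; lia).
    rewrite (map_nth (fun i => zfloor N (vc u i)) (seq 0 d) 0%nat i), seq_nth by auto.
    apply zfloor_div_error; auto.
Qed.

(** * Query algorithms *)

Fixpoint askAll {d} (ps : list (vec d)) (k : list R -> qalg d) : qalg d :=
  match ps with
  | nil => k nil
  | p :: ps' => Ask p (fun y => askAll ps' (fun ys => k (y :: ys)))
  end.

Lemma run_askAll {d} (ps : list (vec d)) k f :
  run (askAll ps k) f =
  (fst (run (k (map f ps)) f), (length ps + snd (run (k (map f ps)) f))%nat).
Proof.
  revert k. induction ps as [|p ps IH]; intros k; simpl.
  - destruct (run (k nil) f); auto.
  - rewrite IH. reflexivity.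
Qed.

Fixpoint lookup {d} (ps : list (vec d)) (ys : list R) (p : vec d) : R :=
  match ps, ys with
  | p' :: ps', y :: ys' => if excluded_middle_informative (p = p') then y else lookup ps' ys' p
  | _, _ => 0
  end.

Lemma lookup_map {d} (ps : list (vec d)) f p : In p ps -> lookup ps (map f ps) p = f p.
Proof.
  induction ps as [|p' ps IH]; simpl; intros H; [contradiction|].
  destruct (excluded_middle_informative (p = p')) as [->|Hne]; auto.
  apply IH. destruct H; congruence.
Qed.

Definition pick {A} (P : A -> Prop) (G : list A) : option A :=
  find (fun w => if excluded_middle_informative (P w) then true else false) G.

Lemma pick_some {A} (P : A -> Prop) G w : pick P G = Some w -> In w G /\ P w.
Proof.
  intros E. apply find_some in E as [Hw HP].
  destruct (excluded_middle_informative (P w)); [auto | discriminate].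
Qed.

Lemma pick_none {A} (P : A -> Prop) G : pick P G = None -> forall w, In w G -> ~ P w.
Proof.
  intros E w Hw HP. apply (find_none _ _ E) in Hw.
  destruct (excluded_middle_informative (P w)); [discriminate | auto].
Qed.

Fixpoint descend {d} (Q : vec d -> list (vec d))
    (step : vec d -> (vec d -> R) -> option (vec d)) (n : nat) (x : vec d) : qalg d :=
  match n with
  | O => Ret x
  | S n' => askAll (Q x) (fun ys =>
      match step x (lookup (Q x) ys) with
      | Some x' => descend Q step n' x'
      | None => Ret x
      end)
  end.

Definition agrees_on {d} (ps : list (vec d)) (fv f : vec d -> R) : Prop :=
  forall p, In p ps -> fv p = f p.

Lemma run_descend {d} Q step (f Phi : vec d -> R) (Good : vec d -> Prop) Delta K :
  (forall x, 0 <= Phi x) -> (forall x, length (Q x) = K) ->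
  (forall x fv x', agrees_on (Q x) fv f -> step x fv = Some x' -> Phi x' <= Phi x - Delta) ->
  (forall x fv, agrees_on (Q x) fv f -> step x fv = None -> Good x) ->
  forall n x, Phi x < INR n * Delta ->
  Good (fst (run (descend Q step n x) f)) /\ (snd (run (descend Q step n x) f) <= n * K)%nat.
Proof.
  intros Hpos HK Hdown Hstop n. induction n as [|n IH]; intros x Hx.
  - specialize (Hpos x). simpl in Hx. lra.
  - assert (Hag : agrees_on (Q x) (lookup (Q x) (map f (Q x))) f)
      by (intros p Hp; apply lookup_map, Hp).
    cbn [descend]. rewrite run_askAll, HK. cbn [fst snd].
    destruct (step x (lookup (Q x) (map f (Q x)))) as [x'|] eqn:E.
    + assert (Hx' := Hdown _ _ _ Hag E). rewrite S_INR in Hx.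
      destruct (IH x' ltac:(lra)) as [G1 G2]. split; [auto | lia].
    + simpl. split; [eapply Hstop; eauto | lia].
Qed.

(** * One round of the algorithm *)

Lemma dot_near_direction {d} (g w : vec d) zeta :
  0 < vnorm g -> vnorm (vsub w (vscale (/ vnorm g) g)) <= zeta -> (1 - zeta) * vnorm g <= dot g w.
Proof.
  intros Hg Hwu. set (u := vscale (/ vnorm g) g) in *.
  assert (Hgu : dot g u = vnorm g) by (unfold u; rewrite dot_scale_r, <- vnorm_sq; field; lra).
  assert (H := cauchy_schwarz g (vsub w u)).
  rewrite dot_sub_r, Hgu in H.
  assert (Habs := Rle_abs (- (dot g w - vnorm g))). rewrite Rabs_Ropp in Habs.
  assert (vnorm g * vnorm (vsub w u) <= vnorm g * zeta) by (apply Rmult_le_compat_l; lra).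
  lra.
Qed.

Lemma quad_form_near {d} (A : mat) l (u w : vec d) zeta :
  0 <= l -> (forall v : vec d, vnorm (mv A v) <= l * vnorm v) ->
  vnorm u = 1 -> vnorm w <= 2 -> vnorm (vsub w u) <= zeta ->
  dot (mv A w) w - 3 * l * zeta <= dot (mv A u) u.
Proof.
  intros Hl HA Hu Hw Hwu.
  assert (E : dot (mv A w) w - dot (mv A u) u = dot (mv A (vsub w u)) w + dot (mv A u) (vsub w u))
    by (rewrite mv_sub, dot_sub_l, dot_sub_r; ring).
  assert (B1 : Rabs (dot (mv A (vsub w u)) w) <= l * zeta * 2).
  { eapply Rle_trans; [apply cauchy_schwarz|].
    apply Rmult_le_compat; auto using vnorm_nonneg.
    eapply Rle_trans; [apply HA | apply Rmult_le_compat_l; auto]. }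
  assert (B2 : Rabs (dot (mv A u) (vsub w u)) <= l * 1 * zeta).
  { eapply Rle_trans; [apply cauchy_schwarz|]. rewrite <- Hu.
    apply Rmult_le_compat; auto using vnorm_nonneg. }
  pose proof (Rle_abs (dot (mv A (vsub w u)) w)). pose proof (Rle_abs (dot (mv A u) (vsub w u))).
  lra.
Qed.

Lemma lambda_min_ge_weaken d (A : mat) s s' :
  s' <= s -> lambda_min_ge d A s -> lambda_min_ge d A s'.
Proof. intros Hs H lam Hlam. specialize (H lam Hlam). lra. Qed.

Section Round.

Variables (d : nat) (G : list (vec d)) (h q U eta eps : R).

Definition queries (x : vec d) : list (vec d) :=
  x :: flat_map (fun w => pt x h w :: pt x (- h) w :: pt x q w :: pt x (- q) w :: nil) G.

Definition fd_slope (fv : vec d -> R) (x w : vec d) : R :=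
  (fv (pt x h w) - fv (pt x (- h) w)) / (2 * h).

Definition fd_curv (fv : vec d -> R) (x w : vec d) : R :=
  fv (pt x q w) + fv (pt x (- q) w) - 2 * fv x.

(* Only directions with [|w| <= 2] are tested, so that the Taylor errors are uniform. *)
Definition slope_test (fv : vec d -> R) (x w : vec d) : Prop :=
  vnorm w <= 2 /\ eps < fd_slope fv x w.

Definition curv_test (fv : vec d -> R) (x w : vec d) : Prop :=
  vnorm w <= 2 /\ fd_curv fv x w < - U.

Definition step (x : vec d) (fv : vec d -> R) : option (vec d) :=
  match pick (slope_test fv x) G with
  | Some w => Some (pt x (- eta) w)
  | None =>
    match pick (curv_test fv x) G with
    | Some w =>
        Some (if Rle_dec (fv (pt x q w)) (fv (pt x (- q) w)) then pt x q w else pt x (- q) w)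
    | None => None
    end
  end.

Lemma queries_length x : length (queries x) = (1 + 4 * length G)%nat.
Proof. unfold queries. simpl. induction G; simpl; auto. rewrite IHl. lia. Qed.

Lemma agrees_on_queries x fv f w : agrees_on (queries x) fv f -> In w G ->
  fd_slope fv x w = fd_slope f x w /\ fd_curv fv x w = fd_curv f x w /\
  fv (pt x q w) = f (pt x q w) /\ fv (pt x (- q) w) = f (pt x (- q) w).
Proof.
  intros Hag Hw.
  assert (Hin : forall p, In p (pt x h w :: pt x (- h) w :: pt x q w :: pt x (- q) w :: nil) ->
                  fv p = f p).
  { intros p Hp. apply Hag. right. apply in_flat_map. eauto. }
  unfold fd_slope, fd_curv.
  rewrite (Hag x), !Hin by (simpl; tauto). auto.
Qed.

Variables (F f : vec d -> R) (gF : vec d -> vec d) (HF : vec d -> mat) (l rho nu : R).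
Hypothesis HG : has_gradient F gF.
Hypothesis HJ : has_jacobian gF HF.
Hypothesis HLg : forall x y, vnorm (vsub (gF x) (gF y)) <= l * vnorm (vsub x y).
Hypothesis HLH : forall x y, opnorm_le d (msub (HF x) (HF y)) (rho * vnorm (vsub x y)).
Hypothesis Hnu : forall x, Rabs (F x - f x) <= nu.
Hypothesis Hrho : 0 <= rho.
Hypothesis Hl : 0 <= l.
Hypothesis Hh : 0 < h.
Hypothesis Hq : 0 < q.

Lemma noise_bounds y : F y - nu <= f y <= F y + nu.
Proof.
  specialize (Hnu y). pose proof (Rle_abs (F y - f y)). pose proof (Rle_abs (- (F y - f y))).
  rewrite Rabs_Ropp in *. lra.
Qed.

Lemma cube_le_8 (w : vec d) : vnorm w <= 2 -> vnorm w ^ 3 <= 8.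
Proof.
  intros Hw. replace 8 with (2 ^ 3) by ring. apply pow_incr. split; auto using vnorm_nonneg.
Qed.

Lemma fd_slope_error x w : vnorm w <= 2 ->
  Rabs (fd_slope f x w - dot (gF x) w) <= nu / h + 8 * rho * h ^ 2.
Proof.
  intros Hw. assert (E := central_difference_error d F gF HF rho HG HJ HLH x w h Hh).
  assert (Hrw : rho * vnorm w ^ 3 * h ^ 3 <= rho * 8 * h ^ 3).
  { apply Rmult_le_compat_r; [apply pow_le; lra | apply Rmult_le_compat_l; auto using cube_le_8]. }
  destruct (noise_bounds (pt x h w)), (noise_bounds (pt x (- h) w)).
  unfold fd_slope.
  replace ((f (pt x h w) - f (pt x (- h) w)) / (2 * h) - dot (gF x) w)
    with ((f (pt x h w) - f (pt x (- h) w) - 2 * h * dot (gF x) w) / (2 * h)) by (field; lra).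
  replace (nu / h + 8 * rho * h ^ 2) with ((2 * nu + 16 * rho * h ^ 3) / (2 * h)) by (field; lra).
  unfold Rdiv. rewrite Rabs_mult, (Rabs_right (/ (2 * h))) by (left; apply Rinv_0_lt_compat; lra).
  apply Rmult_le_compat_r; [left; apply Rinv_0_lt_compat; lra|].
  pose proof (Rle_abs (F (pt x h w) - F (pt x (- h) w) - 2 * h * dot (gF x) w)).
  pose proof (Rle_abs (- (F (pt x h w) - F (pt x (- h) w) - 2 * h * dot (gF x) w))).
  rewrite Rabs_Ropp in *. apply Rabs_le. lra.
Qed.

Lemma fd_curv_lower x w : vnorm w <= 2 ->
  fd_curv f x w - 4 * nu - 16 * rho * q ^ 3 <= q ^ 2 * dot (mv (HF x) w) w.
Proof.
  intros Hw. assert (E := second_difference_error d F gF HF rho HG HJ HLH x w q Hq).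
  assert (Hrw : rho * vnorm w ^ 3 * q ^ 3 <= rho * 8 * q ^ 3).
  { apply Rmult_le_compat_r; [apply pow_le; lra | apply Rmult_le_compat_l; auto using cube_le_8]. }
  destruct (noise_bounds (pt x q w)), (noise_bounds (pt x (- q) w)), (noise_bounds x).
  pose proof (Rle_abs (F (pt x q w) + F (pt x (- q) w) - 2 * F x - q ^ 2 * dot (mv (HF x) w) w)).
  unfold fd_curv. lra.
Qed.

Lemma step_descent Delta x fv x' :
  0 < eta -> nu / h + 8 * rho * h ^ 2 <= eps / 4 ->
  Delta <= eta * (3 * eps / 4) - 4 * l * eta ^ 2 -> Delta <= U / 2 - 2 * nu ->
  agrees_on (queries x) fv f -> step x fv = Some x' -> F x' <= F x - Delta.
Proof.
  intros Heta Hacc Hgrad Hcurv Hag. unfold step.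
  destruct (pick (slope_test fv x) G) as [w|] eqn:Eslope.
  - intros E. injection E as <-.
    destruct (pick_some _ _ _ Eslope) as [Hw [Hw2 Hs]].
    rewrite (proj1 (agrees_on_queries x fv f w Hag Hw)) in Hs.
    assert (Herr := fd_slope_error x w Hw2).
    pose proof (Rle_abs (fd_slope f x w - dot (gF x) w)).
    assert (HS := descent_lemma d F gF l HG HLg x w eta Hl Heta).
    assert (vnorm w ^ 2 <= 4) by (pose proof (vnorm_nonneg w); nra).
    assert (l * eta ^ 2 * vnorm w ^ 2 <= 4 * l * eta ^ 2).
    { replace (4 * l * eta ^ 2) with (l * eta ^ 2 * 4) by ring.
      apply Rmult_le_compat_l; auto. apply Rmult_le_pos; auto. apply pow_le; lra. }
    assert (eta * (3 * eps / 4) <= eta * dot (gF x) w) by (apply Rmult_le_compat_l; lra).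
    lra.
  - destruct (pick (curv_test fv x) G) as [w|] eqn:Ecurv; [|discriminate].
    intros E. injection E as <-.
    destruct (pick_some _ _ _ Ecurv) as [Hw [Hw2 Hc]].
    destruct (agrees_on_queries x fv f w Hag Hw) as [_ [Ec [E1 E2]]].
    rewrite Ec in Hc. rewrite E1, E2. unfold fd_curv in Hc.
    destruct (noise_bounds (pt x q w)), (noise_bounds (pt x (- q) w)), (noise_bounds x).
    destruct (Rle_dec _ _); lra.
Qed.

Variable zeta : R.
Hypothesis Hgrid : forall u : vec d, vnorm u = 1 -> exists w, In w G /\ vnorm (vsub w u) <= zeta.
Hypothesis Hzeta : zeta <= 1 / 4.

Lemma grid_direction (u : vec d) : vnorm u = 1 ->
  exists w, In w G /\ vnorm w <= 2 /\ vnorm (vsub w u) <= zeta.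
Proof.
  intros Hu. destruct (Hgrid u Hu) as [w [Hw Hwu]]. exists w.
  pose proof (vnorm_le_sub_add w u). repeat split; auto; lra.
Qed.

Lemma step_stop_gradient x fv :
  0 <= eps -> nu / h + 8 * rho * h ^ 2 <= eps / 4 ->
  agrees_on (queries x) fv f -> step x fv = None -> vnorm (gF x) <= 5 / 3 * eps.
Proof.
  intros Heps Hacc Hag. unfold step.
  destruct (pick (slope_test fv x) G) eqn:Eslope; [discriminate|]. intros _. set (g := gF x).
  destruct (Rle_lt_dec (vnorm g) 0) as [Hg0|Hg]; [lra|].
  destruct (grid_direction _ (vnorm_normalize g Hg)) as [w [Hw [Hw2 Hwu]]].
  assert (Hs : fd_slope f x w <= eps).
  { rewrite <- (proj1 (agrees_on_queries x fv f w Hag Hw)).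
    apply Rnot_lt_le. intros Hlt. exact (pick_none _ _ Eslope w Hw (conj Hw2 Hlt)). }
  assert (Herr := fd_slope_error x w Hw2). fold g in Herr.
  pose proof (Rle_abs (- (fd_slope f x w - dot g w))). rewrite Rabs_Ropp in *.
  assert (Hdir := dot_near_direction g w zeta Hg Hwu).
  assert ((1 - 1 / 4) * vnorm g <= (1 - zeta) * vnorm g) by (apply Rmult_le_compat_r; lra).
  lra.
Qed.

Lemma step_stop_curvature x fv :
  agrees_on (queries x) fv f -> step x fv = None ->
  lambda_min_ge d (HF x) (- ((U + 4 * nu + 16 * rho * q ^ 3) / q ^ 2 + 3 * l * zeta)).
Proof.
  intros Hag. unfold step. destruct (pick (slope_test fv x) G); [discriminate|].
  destruct (pick (curv_test fv x) G) eqn:Ecurv; [discriminate|]. intros _.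
  intros lam [v [Hv Heig]].
  assert (Hv0 := vnorm_pos v Hv).
  assert (Hlam := eigenvalue_quad_form (HF x) lam v Hv0 Heig).
  set (u := vscale (/ vnorm v) v) in Hlam.
  destruct (grid_direction u (vnorm_normalize v Hv0)) as [w [Hw [Hw2 Hwu]]].
  assert (Hc : - U <= fd_curv f x w).
  { rewrite <- (proj1 (proj2 (agrees_on_queries x fv f w Hag Hw))).
    apply Rnot_lt_le. intros Hlt. exact (pick_none _ _ Ecurv w Hw (conj Hw2 Hlt)). }
  assert (Hww : - ((U + 4 * nu + 16 * rho * q ^ 3) / q ^ 2) <= dot (mv (HF x) w) w).
  { assert (Hq2 : 0 < q ^ 2) by (apply pow_lt; lra).
    apply Rmult_le_reg_l with (q ^ 2); auto.
    replace (q ^ 2 * - ((U + 4 * nu + 16 * rho * q ^ 3) / q ^ 2))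
      with (- (U + 4 * nu + 16 * rho * q ^ 3)) by (field; lra).
    pose proof (fd_curv_lower x w Hw2). lra. }
  assert (Hnear := quad_form_near (HF x) l u w zeta Hl (hessian_opnorm_le d gF HF l HJ HLg x)
                     (vnorm_normalize v Hv0) Hw2 Hwu).
  lra.
Qed.

End Round.

(** * Parameters and query count *)

Definition qlen (eps rho : R) : R := sqrt (eps / rho).

(* Makes the grid mesh [sqrt d / N] at most [1/4] and at most [sqrt (rho eps) / (3 l)]. *)
Definition grid_res (d : nat) (l rho eps : R) : nat :=
  S (Z.to_nat (up (sqrt (INR d) * (4 + 3 * l / sqrt (rho * eps))))).

Definition decrease (l rho eps : R) : R := Rmin (eps ^ 2 / (32 * l)) (eps * qlen eps rho / 4).

Definition max_rounds (B l rho eps : R) : nat := S (Z.to_nat (up (2 * B / decrease l rho eps))).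

Definition algo_queries (d : nat) (l rho eps : R) : vec d -> list (vec d) :=
  queries d (grid d (grid_res d l rho eps)) (qlen eps rho / 8) (qlen eps rho).

Definition algo_step (d : nat) (l rho eps : R) : vec d -> (vec d -> R) -> option (vec d) :=
  let q := qlen eps rho in
  step d (grid d (grid_res d l rho eps)) (q / 8) q (eps * q) (eps / (8 * l)) eps.

Definition algorithm (d : nat) (B l rho eps nu : R) : qalg d :=
  descend (algo_queries d l rho eps) (algo_step d l rho eps) (max_rounds B l rho eps) (vzero d).

Lemma INR_up_nat X : 0 <= X -> INR (Z.to_nat (up X)) = IZR (up X).
Proof.
  intros HX. destruct (archimed X).
  rewrite INR_IZR_INZ, Z2Nat.id; [auto | apply le_IZR; simpl; lra].
Qed.

Lemma INR_S_up_gt X : 0 <= X -> X < INR (S (Z.to_nat (up X))).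
Proof. intros HX. rewrite S_INR, INR_up_nat by auto. destruct (archimed X). lra. Qed.

Lemma INR_S_up_le X : 0 <= X -> INR (S (Z.to_nat (up X))) <= X + 2.
Proof. intros HX. rewrite S_INR, INR_up_nat by auto. destruct (archimed X). lra. Qed.

Lemma qlen_facts eps rho : 0 < eps -> 0 < rho ->
  let q := qlen eps rho in
  0 < q /\ rho * q ^ 2 = eps /\ sqrt (eps ^ 3 / rho) = eps * q /\ sqrt (rho * eps) = rho * q /\
  sqrt (rho * (400 * eps)) = 20 * (rho * q).
Proof.
  intros He Hr q.
  assert (Hq : 0 < q) by (apply sqrt_lt_R0, Rdiv_lt_0_compat; auto).
  assert (E : rho * q ^ 2 = eps).
  { unfold q, qlen. rewrite <- Rsqr_pow2, Rsqr_sqrt by (left; apply Rdiv_lt_0_compat; auto).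
    field. lra. }
  repeat split; auto.
  - replace (eps ^ 3 / rho) with ((eps * q) ^ 2) by (rewrite <- E; field; lra).
    apply sqrt_pow2; nra.
  - replace (rho * eps) with ((rho * q) ^ 2) by (rewrite <- E; ring). apply sqrt_pow2; nra.
  - replace (rho * (400 * eps)) with ((20 * (rho * q)) ^ 2) by (rewrite <- E; ring).
    apply sqrt_pow2; nra.
Qed.

Lemma decrease_pos l rho eps :
  0 < eps -> 0 < rho -> sqrt (rho * eps) < l -> 0 < decrease l rho eps.
Proof.
  intros He Hr Hl. destruct (qlen_facts eps rho He Hr) as [Hq _].
  assert (0 < l) by (pose proof (sqrt_pos (rho * eps)); lra).
  apply Rmin_glb_lt; apply Rdiv_lt_0_compat; nra.
Qed.

Lemma grid_covers_sphere d N : (0 < N)%nat -> forall u : vec d, vnorm u = 1 ->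
  exists w, In w (grid d N) /\ vnorm (vsub w u) <= sqrt (INR d) / INR N.
Proof. intros HN u Hu. apply grid_approx; auto using vnorm1_coord. Qed.

Section Correctness.

Variables (d : nat) (B l rho eps nu : R).
Variables (F f : vec d -> R) (gF : vec d -> vec d) (HF : vec d -> mat).
Hypothesis He : 0 < eps.
Hypothesis Hr : 0 < rho.
Hypothesis HA : assumptionA d F f gF HF B l rho nu.
Hypothesis Hnu : nu <= 1 / 64 * sqrt (eps ^ 3 / rho).
Hypothesis Hl : sqrt (rho * eps) < l.

Lemma grid_res_spec :
  let zeta := sqrt (INR d) / INR (grid_res d l rho eps) in
  zeta <= 1 / 4 /\ 3 * l * zeta <= rho * qlen eps rho.
Proof.
  destruct (qlen_facts eps rho He Hr) as [Hq [_ [_ [Eq _]]]].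
  intros zeta. set (q := qlen eps rho) in *. set (N := grid_res d l rho eps) in *.
  rewrite Eq in Hl. set (k := 4 + 3 * l / (rho * q)).
  assert (Hk : 4 < k)
    by (assert (0 < 3 * l / (rho * q)) by (apply Rdiv_lt_0_compat; nra); unfold k; lra).
  assert (HNk : sqrt (INR d) * k < INR N).
  { unfold N, grid_res. rewrite Eq. fold k. apply INR_S_up_gt. pose proof (sqrt_pos (INR d)). nra. }
  assert (HN : 0 < INR N) by (pose proof (sqrt_pos (INR d)); nra).
  assert (Hz0 : 0 <= zeta)
    by (apply Rmult_le_pos; [apply sqrt_pos | left; apply Rinv_0_lt_compat; auto]).
  assert (Hzk : zeta * k <= 1).
  { unfold zeta. apply Rmult_le_reg_r with (INR N); auto.
    replace (sqrt (INR d) / INR N * k * INR N) with (sqrt (INR d) * k) by (field; lra). lra. }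
  split; [nra|].
  assert (E : zeta * k = 4 * zeta + 3 * l * zeta / (rho * q)) by (unfold k; field; nra).
  assert (Hratio : 3 * l * zeta / (rho * q) <= 1) by nra.
  apply Rmult_le_reg_r with (/ (rho * q)); [apply Rinv_0_lt_compat; nra|].
  rewrite Rinv_r by nra. exact Hratio.
Qed.

Lemma bound_nonneg : 0 <= B.
Proof.
  destruct HA as [_ [_ [HB _]]]. pose proof (HB (vzero d)). pose proof (Rabs_pos (F (vzero d))).
  lra.
Qed.

Lemma potential_nonneg x : 0 <= F x + B.
Proof.
  destruct HA as [_ [_ [HB _]]]. pose proof (HB x). pose proof (Rle_abs (- F x)).
  rewrite Rabs_Ropp in *. lra.
Qed.

Lemma noise_nonneg : 0 <= nu.
Proof.
  destruct HA as [_ [_ [_ [_ [_ H]]]]]. eapply Rle_trans; [apply Rabs_pos | apply (H (vzero d))].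
Qed.

Lemma parameter_bounds :
  let q := qlen eps rho in
  0 < q /\ 0 < l /\ nu / (q / 8) + 8 * rho * (q / 8) ^ 2 <= eps / 4 /\
  decrease l rho eps <= eps / (8 * l) * (3 * eps / 4) - 4 * l * (eps / (8 * l)) ^ 2 /\
  decrease l rho eps <= eps * q / 2 - 2 * nu /\
  (eps * q + 4 * nu + 16 * rho * q ^ 3) / q ^ 2 + rho * q <= sqrt (rho * (400 * eps)).
Proof.
  intros q. destruct (qlen_facts eps rho He Hr) as [Hq [E1 [E2 [E3 E4]]]].
  fold q in Hq, E1, E2, E3, E4.
  rewrite E2 in Hnu. rewrite E3 in Hl. pose proof noise_nonneg.
  assert (Hl0 : 0 < l) by nra.
  repeat split; auto.
  - replace (nu / (q / 8) + 8 * rho * (q / 8) ^ 2) with (8 * nu / q + rho * q ^ 2 / 8)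
      by (field; lra).
    assert (8 * nu / q <= eps / 8).
    { apply Rmult_le_reg_r with q; auto.
      replace (8 * nu / q * q) with (8 * nu) by (field; lra). nra. }
    lra.
  - replace (eps / (8 * l) * (3 * eps / 4) - 4 * l * (eps / (8 * l)) ^ 2) with (eps ^ 2 / (32 * l))
      by (field; lra). apply Rmin_l.
  - assert (decrease l rho eps <= eps * q / 4) by apply Rmin_r. nra.
  - rewrite E4.
    assert ((eps * q + 4 * nu + 16 * rho * q ^ 3) / q ^ 2 <= 18 * (rho * q)).
    { apply Rmult_le_reg_r with (q ^ 2); [apply pow_lt; lra|].
      replace ((eps * q + 4 * nu + 16 * rho * q ^ 3) / q ^ 2 * q ^ 2)
        with (eps * q + 4 * nu + 16 * rho * q ^ 3) by (field; lra).
      rewrite <- E1 in Hnu |- *. nra. }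
    nra.
Qed.

Lemma algo_step_decrease x fv x' :
  agrees_on (algo_queries d l rho eps x) fv f -> algo_step d l rho eps x fv = Some x' ->
  F x' <= F x - decrease l rho eps.
Proof.
  destruct HA as [HG [HJ [_ [HLg [HLH Hnoise]]]]].
  destruct parameter_bounds as [Hq [Hl0 [Hacc [Hgrad [Hcurv _]]]]].
  apply step_descent with (gF := gF) (HF := HF) (l := l) (rho := rho) (nu := nu); auto; try lra.
  apply Rdiv_lt_0_compat; lra.
Qed.

Lemma algo_step_stop x fv :
  agrees_on (algo_queries d l rho eps x) fv f -> algo_step d l rho eps x fv = None ->
  is_SOSP gF HF rho (400 * eps) x.
Proof.
  intros Hag Hstop. destruct HA as [HG [HJ [_ [HLg [HLH Hnoise]]]]].
  destruct parameter_bounds as [Hq [Hl0 [Hacc [_ [_ Hcurv]]]]].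
  destruct grid_res_spec as [Hz1 Hz2].
  set (q := qlen eps rho) in *. set (N := grid_res d l rho eps) in *.
  assert (Hcover := grid_covers_sphere d N ltac:(unfold N, grid_res; lia)).
  split.
  - enough (vnorm (gF x) <= 5 / 3 * eps) by lra.
    eapply step_stop_gradient with (G := grid d N) (h := q / 8) (q := q) (U := eps * q)
      (eta := eps / (8 * l)) (zeta := sqrt (INR d) / INR N); eauto; lra.
  - eapply lambda_min_ge_weaken;
      [| eapply step_stop_curvature with (G := grid d N) (h := q / 8) (q := q) (U := eps * q)
           (eta := eps / (8 * l)) (eps := eps) (zeta := sqrt (INR d) / INR N); eauto; lra].
    lra.
Qed.

Lemma algo_start : F (vzero d) + B < INR (max_rounds B l rho eps) * decrease l rho eps.
Proof.
  assert (HD := decrease_pos l rho eps He Hr Hl).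
  assert (H2B := INR_S_up_gt (2 * B / decrease l rho eps)).
  replace (2 * B / decrease l rho eps) with (2 * B * / decrease l rho eps) in H2B by reflexivity.
  pose proof bound_nonneg. pose proof (Rinv_0_lt_compat _ HD).
  apply Rmult_lt_compat_r with (r := decrease l rho eps) in H2B; [|auto | nra].
  rewrite Rmult_assoc, Rinv_l in H2B by lra.
  destruct HA as [_ [_ [HB _]]]. pose proof (HB (vzero d)). pose proof (Rle_abs (F (vzero d))).
  unfold max_rounds. lra.
Qed.

End Correctness.

Definition size_param (d : nat) (B l rho eps : R) : R :=
  INR (d + 1) * (1 + B) * (1 + l) * (1 + rho) * (1 + / rho) * (1 + / eps).

Lemma Rmult_ge_1 x y : 1 <= x -> 1 <= y -> 1 <= x * y.
Proof. intros; nra. Qed.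

Lemma Rmult_le_compat_ge_1 x1 x2 y1 y2 :
  1 <= x1 -> 1 <= x2 -> x1 <= y1 -> x2 <= y2 -> x1 * x2 <= y1 * y2.
Proof. intros; nra. Qed.

Lemma inv_le_of_inv_sq a P : 0 < a -> 0 <= P -> / (a * a) <= P * P -> / a <= P.
Proof. intros Ha HP H. rewrite Rinv_mult in H. pose proof (Rinv_0_lt_compat a Ha). nra. Qed.

Section Counting.

Variables (d : nat) (B l rho eps : R).
Hypothesis He : 0 < eps.
Hypothesis Hr : 0 < rho.
Hypothesis HB : 0 <= B.
Hypothesis Hl : sqrt (rho * eps) < l.

Let P := size_param d B l rho eps.

Lemma size_param_bounds :
  1 <= P /\ sqrt (INR d) <= P /\ l <= P /\ B <= P /\
  / sqrt (rho * eps) <= P /\ / qlen eps rho <= P /\ / eps <= P.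
Proof.
  assert (Hs : 0 < sqrt (rho * eps)) by (apply sqrt_lt_R0; nra).
  assert (Hir : 0 < / rho) by (apply Rinv_0_lt_compat; auto).
  assert (Hie : 0 < / eps) by (apply Rinv_0_lt_compat; auto).
  assert (Hd : 1 <= INR (d + 1)) by (rewrite plus_INR; pose proof (pos_INR d); simpl; lra).
  (* each factor is at most the product of all six factors, which are all [>= 1] *)
  assert (Pd : INR (d + 1) * 1 * 1 * 1 * 1 * 1 <= P)
    by (unfold P, size_param; repeat (apply Rmult_le_compat_ge_1 || apply Rmult_ge_1); lra).
  assert (PB : 1 * (1 + B) * 1 * 1 * 1 * 1 <= P)
    by (unfold P, size_param; repeat (apply Rmult_le_compat_ge_1 || apply Rmult_ge_1); lra).
  assert (Pl : 1 * 1 * (1 + l) * 1 * 1 * 1 <= P)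
    by (unfold P, size_param; repeat (apply Rmult_le_compat_ge_1 || apply Rmult_ge_1); lra).
  assert (Pr : 1 * 1 * 1 * (1 + rho) * 1 * 1 <= P)
    by (unfold P, size_param; repeat (apply Rmult_le_compat_ge_1 || apply Rmult_ge_1); lra).
  assert (Pir : 1 * 1 * 1 * 1 * (1 + / rho) * 1 <= P)
    by (unfold P, size_param; repeat (apply Rmult_le_compat_ge_1 || apply Rmult_ge_1); lra).
  assert (Pie : 1 * 1 * 1 * 1 * 1 * (1 + / eps) <= P)
    by (unfold P, size_param; repeat (apply Rmult_le_compat_ge_1 || apply Rmult_ge_1); lra).
  repeat split; try lra.
  - assert (H := sqrt_sqrt (INR d) (pos_INR d)). pose proof (sqrt_pos (INR d)).
    rewrite plus_INR in Pd. simpl in Pd. nra.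
  - apply inv_le_of_inv_sq; auto; [lra|].
    rewrite sqrt_sqrt, Rinv_mult by nra. apply Rmult_le_compat; lra.
  - destruct (qlen_facts eps rho He Hr) as [Hq _].
    apply inv_le_of_inv_sq; auto; [lra|].
    unfold qlen. rewrite sqrt_sqrt by (left; apply Rdiv_lt_0_compat; auto). unfold Rdiv.
    rewrite Rinv_mult, Rinv_inv. apply Rmult_le_compat; lra.
Qed.

Lemma grid_res_le : INR (grid_res d l rho eps) <= 9 * P ^ 3.
Proof.
  destruct size_param_bounds as [HP1 [Hsd [HlP [_ [His _]]]]].
  assert (Hs : 0 < sqrt (rho * eps)) by (apply sqrt_lt_R0; nra).
  assert (Hq : 0 < 3 * l / sqrt (rho * eps)) by (apply Rdiv_lt_0_compat; lra).
  assert (0 < / sqrt (rho * eps)) by (apply Rinv_0_lt_compat; auto).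
  assert (3 * l / sqrt (rho * eps) <= 3 * P * P).
  { unfold Rdiv. rewrite Rmult_assoc. replace (3 * P * P) with (3 * (P * P)) by ring.
    apply Rmult_le_compat_l; [lra|]. apply Rmult_le_compat; lra. }
  assert (sqrt (INR d) * (4 + 3 * l / sqrt (rho * eps)) <= P * (4 + 3 * P * P))
    by (apply Rmult_le_compat; auto using sqrt_pos; lra).
  eapply Rle_trans; [apply INR_S_up_le; pose proof (sqrt_pos (INR d)); nra|]. simpl. nra.
Qed.

Lemma max_rounds_le : INR (max_rounds B l rho eps) <= 74 * P ^ 4.
Proof.
  destruct size_param_bounds as [HP1 [_ [HlP [HBP [_ [Hiq Hie]]]]]].
  destruct (qlen_facts eps rho He Hr) as [Hq _].
  assert (Hl0 : 0 < l) by (pose proof (sqrt_pos (rho * eps)); lra).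
  assert (0 < / eps) by (apply Rinv_0_lt_compat; auto).
  assert (HD : / decrease l rho eps <= 36 * P ^ 3).
  { assert (/ (eps ^ 2 / (32 * l)) <= 32 * P ^ 3).
    { replace (/ (eps ^ 2 / (32 * l))) with (32 * (l * (/ eps * / eps))) by (field; lra).
      simpl. rewrite Rmult_1_r. apply Rmult_le_compat_l; [lra|].
      apply Rmult_le_compat; [lra | apply Rmult_le_pos; lra | lra | apply Rmult_le_compat; lra]. }
    assert (/ (eps * qlen eps rho / 4) <= 4 * P ^ 2).
    { replace (/ (eps * qlen eps rho / 4)) with (4 * (/ eps * / qlen eps rho)) by (field; lra).
      simpl. rewrite Rmult_1_r. apply Rmult_le_compat_l; [lra|].
      apply Rmult_le_compat; try lra. left; apply Rinv_0_lt_compat; auto. }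
    assert (P ^ 2 <= P ^ 3) by (apply Rle_pow; auto; lra).
    unfold decrease, Rmin. destruct (Rle_dec _ _); pose proof (pow_le P 3); lra. }
  assert (Hpos := decrease_pos l rho eps He Hr Hl).
  assert (2 * B / decrease l rho eps <= 72 * P ^ 4).
  { unfold Rdiv. replace (72 * P ^ 4) with ((2 * P) * (36 * P ^ 3)) by ring.
    apply Rmult_le_compat; try lra. left; apply Rinv_0_lt_compat; auto. }
  eapply Rle_trans; [apply INR_S_up_le, Rmult_le_pos; [lra | left; apply Rinv_0_lt_compat; auto]|].
  assert (1 <= P ^ 4) by (apply pow_R1_Rle; lra). lra.
Qed.

Lemma query_count_le :
  INR (max_rounds B l rho eps * (1 + 4 * Nat.pow (2 * grid_res d l rho eps + 1) d))
    <= exp (20 * INR ((d + 1) * (d + 1)) * ln (2 + P)).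
Proof.
  destruct size_param_bounds as [HP1 _].
  set (Y := 2 + P). assert (HY : 2 <= Y) by (unfold Y; lra).
  assert (HPY : P <= Y) by (unfold Y; lra).
  assert (HN : INR (2 * grid_res d l rho eps + 1) <= Y ^ 8).
  { rewrite plus_INR, mult_INR. pose proof grid_res_le. simpl (INR 2). simpl (INR 1).
    assert (P ^ 3 <= Y ^ 3) by (apply pow_incr; lra).
    assert (32 <= Y ^ 5) by (replace 32 with (2 ^ 5) by ring; apply pow_incr; lra).
    assert (1 <= P ^ 3) by (apply pow_R1_Rle; lra).
    replace (Y ^ 8) with (Y ^ 3 * Y ^ 5) by ring. nra. }
  assert (HM : INR (max_rounds B l rho eps) <= Y ^ 11).
  { pose proof max_rounds_le.
    assert (P ^ 4 <= Y ^ 4) by (apply pow_incr; lra).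
    assert (128 <= Y ^ 7) by (replace 128 with (2 ^ 7) by ring; apply pow_incr; lra).
    assert (1 <= P ^ 4) by (apply pow_R1_Rle; lra).
    replace (Y ^ 11) with (Y ^ 4 * Y ^ 7) by ring. nra. }
  assert (HYd : INR (Nat.pow (2 * grid_res d l rho eps + 1) d) <= Y ^ (8 * d)).
  { rewrite pow_INR, pow_mult. apply pow_incr. split; [apply pos_INR | auto]. }
  replace (20 * INR ((d + 1) * (d + 1))) with (INR (20 * ((d + 1) * (d + 1))))
    by (rewrite mult_INR; simpl; ring).
  rewrite <- ln_pow, exp_ln by (try apply pow_lt; lra).
  rewrite mult_INR, plus_INR, mult_INR. simpl (INR 1). simpl (INR 4).
  assert (1 <= Y ^ (8 * d)) by (apply pow_R1_Rle; lra).
  assert (8 <= Y ^ 3) by (replace 8 with (2 ^ 3) by ring; apply pow_incr; lra).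
  apply Rle_trans with (Y ^ 11 * (Y ^ 3 * Y ^ (8 * d))).
  { pose proof (pos_INR (max_rounds B l rho eps)).
    pose proof (pos_INR (Nat.pow (2 * grid_res d l rho eps + 1) d)).
    apply Rmult_le_compat; nra. }
  rewrite <- !pow_add. apply Rle_pow; [lra | lia].
Qed.

End Counting.

Theorem mainTheorem3 :
  exists c : R, 0 < c /\
  exists K : R, 1 <= K /\
  exists C : R, 0 < C /\
  exists A : forall d : nat, R -> R -> R -> R -> R -> qalg d,
  forall (d : nat) (B l rho eps nu : R)
         (F f : vec d -> R) (gF : vec d -> vec d) (HF : vec d -> mat),
    0 < eps -> 0 < rho ->
    assumptionA d F f gF HF B l rho nu ->
    nu <= c * sqrt (eps ^ 3 / rho) ->
    sqrt (rho * eps) < l ->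
    is_SOSP gF HF rho (K * eps) (fst (run (A d B l rho eps nu) f)) /\
    INR (snd (run (A d B l rho eps nu) f)) <=
      exp (C * INR ((d + 1) * (d + 1)) *
           ln (2 + INR (d + 1) * (1 + B) * (1 + l) * (1 + rho) * (1 + / rho)
                   * (1 + / eps))).
Proof.
  exists (1 / 64). split; [lra|]. exists 400. split; [lra|]. exists 20. split; [lra|].
  exists algorithm.
  intros d B l rho eps nu F f gF HF He Hr HA Hnu Hl.
  destruct (run_descend (algo_queries d l rho eps) (algo_step d l rho eps) f (fun x => F x + B)
              (is_SOSP gF HF rho (400 * eps)) (decrease l rho eps)
              (1 + 4 * Nat.pow (2 * grid_res d l rho eps + 1) d)
              (fun x => potential_nonneg d B l rho nu F f gF HF HA x))
    with (n := max_rounds B l rho eps) (x := vzero d) as [Hsosp Hcount].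
  - intros x. unfold algo_queries. rewrite queries_length, grid_length. reflexivity.
  - intros x fv x' Hag Hstep.
    pose proof (algo_step_decrease d B l rho eps nu F f gF HF He Hr HA Hnu Hl x fv x' Hag Hstep).
    lra.
  - exact (algo_step_stop d B l rho eps nu F f gF HF He Hr HA Hnu Hl).
  - pose proof (algo_start d B l rho eps nu F f gF HF He Hr HA Hl). lra.
  - split; [exact Hsosp|].
    eapply Rle_trans; [apply le_INR, Hcount|].
    exact (query_count_le d B l rho eps He Hr (bound_nonneg d B l rho nu F f gF HF HA) Hl).
Qed.
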